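(* Let $r\ge 2$ be an even integer. For every nonnegative integer $n$, the number of overpartitions of $n$ in which every non-overlined part is odd and greater than $r$ (overlined parts being unrestricted apart from being distinct) equals the number of partitions of $n$ into odd parts in which parts greater than $r$ may come in two colors (parts at most $r$ have a single color).
   Context: A partition of $n$ is a finite non-increasing sequence of positive integers (parts) summing to $n$ (the empty partition is the unique partition of $0$). In partitions with two colors, two partitions are the same if they have the same multiset of (part, color) pairs; e.g. for $r=2$, $n=6$ the relevant partitions are $5_11,5_21,3_13_1,3_13_2,3_23_2,3_11^3,3_21^3,1^6$. An overpartition of $n$ is a partition of $n$ in which the first occurrence of each part size may be overlined; equivalently, a pair $(\lambda,\mu)$ with $\lambda$ a partition into distinct parts (the overlined parts), $\mu$ an arbitrary partition (the non-overlined parts), and $|\lambda|+|\mu|=n$. *)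

(* Partitions of n are encoded by multiplicity functions:
   index i : 'I_n stands for the part size i.+1 (all parts of a partition of n
   are in 1..n, and every multiplicity is at most n, so 'I_n.+1 suffices). *)
From mathcomp Require Import all_boot.


(* An overpartition of n as a pair (lambda, mu): lambda = set of overlined
   (distinct) part sizes, mu = multiplicities of the non-overlined parts. *)
Definition overptn_odd_gt (r n : nat) (x : {set 'I_n} * {ffun 'I_n -> 'I_n.+1}) : bool :=
  [&& (\sum_(i in x.1) i.+1 + \sum_(i < n) i.+1 * x.2 i == n)
    & [forall i : 'I_n, (0 < x.2 i) ==> (odd i.+1 && (r < i.+1))]].

Definition num_overptn_odd_gt (r n : nat) : nat :=
  #|[pred x : ({set 'I_n} * {ffun 'I_n -> 'I_n.+1})%type | overptn_odd_gt r n x]|.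

(* A two-colored partition of n as a multiset of (part, color) pairs, given by
   its multiplicity function on 'I_n * bool (color false = 1, true = 2). *)
Definition colptn_odd (r n : nat) (m : {ffun 'I_n * bool -> 'I_n.+1}) : bool :=
  [&& (\sum_(p : 'I_n * bool) p.1.+1 * m p == n)
    & [forall p : 'I_n * bool,
        (0 < m p) ==> (odd p.1.+1 && (p.2 ==> (r < p.1.+1)))]].

Definition num_colptn_odd (r n : nat) : nat :=
  #|[pred m : {ffun 'I_n * bool -> 'I_n.+1} | colptn_odd r n m]|.

From mathcomp Require Import all_boot zify.

Set Implicit Arguments.
Unset Strict Implicit.
Unset Printing Implicit Defensive.

(* Glaisher's bijection turns the overlined parts, a set of distinct parts,
   into odd parts of the first colour: the part o * 2^k with o odd becomes
   2^k copies of o.  Conversely the binary digits of the multiplicity of the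
   odd part o tell which parts o * 2^k are overlined.  Non-overlined parts are
   kept as the parts of the second colour. *)

Lemma odd_part_mul2 n : 0 < n -> n`_2^' * 2 ^ logn 2 n = n.
Proof. by move=> n_gt0; rewrite mulnC -p_part partnC. Qed.

Lemma odd_part_odd n : odd n`_2^'.
Proof. by rewrite odd_2'nat part_pnat. Qed.

Lemma odd_part_leq n : 0 < n -> n`_2^' <= n.
Proof. by move=> n_gt0; rewrite dvdn_leq // dvdn_part. Qed.

Lemma odd_part_logn_inj a b : 0 < a -> 0 < b ->
  a`_2^' = b`_2^' -> logn 2 a = logn 2 b -> a = b.
Proof.
move=> a_gt0 b_gt0 ea eb.
by rewrite -(odd_part_mul2 a_gt0) -(odd_part_mul2 b_gt0) ea eb.
Qed.

Lemma odd_mul_pow2_parts o k : odd o -> (o * 2 ^ k)`_2^' = o /\ logn 2 (o * 2 ^ k) = k.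
Proof.
move=> odd_o; have o_gt0 : 0 < o by case: o odd_o.
have logn_ok : logn 2 (o * 2 ^ k) = k.
  by rewrite lognM ?expn_gt0 // pfactorK // logn_coprime // coprime2n odd_o.
split=> //; apply/eqP; rewrite -(eqn_pmul2r (expn_gt0 2 k)) -{2}logn_ok.
by rewrite odd_part_mul2 ?muln_gt0 ?o_gt0 ?expn_gt0.
Qed.

Definition bitn k a := odd (a %/ 2 ^ k).

Lemma bitn_leq k a : bitn k a -> 2 ^ k <= a.
Proof. by rewrite /bitn leqNgt; apply: contraL => /divn_small->. Qed.

Lemma eq_bitn a b : (forall k, bitn k a = bitn k b) -> a = b.
Proof.
move: {2}(a + b) (leqnn (a + b)) => N; elim: N a b => [|N IH] a b hab eq_ab.
  by move: hab; rewrite leqn0 addn_eq0 => /andP[/eqP-> /eqP->].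
have eq_odd : odd a = odd b by have := eq_ab 0; rewrite /bitn !divn1.
rewrite -[a]odd_double_half -[b]odd_double_half eq_odd; congr (_ + _.*2).
apply: IH => [|k]; first by rewrite -!divn2; lia.
by have := eq_ab k.+1; rewrite /bitn expnS !divnMA !divn2.
Qed.

Section SumPow2.
Variables (I : finType) (A : pred I) (g : I -> nat).
Hypothesis g_inj : {in A &, injective g}.

Lemma sum_pow2_eq k :
  \sum_(x | A x && (g x == k)) 2 ^ g x = [exists x, A x && (g x == k)] * 2 ^ k.
Proof.
case: existsP => [[y /andP[Ay /eqP gy]]|none]; last first.
  by rewrite big_pred0 // => x; apply/negP => Px; apply: none; exists x.
rewrite (bigD1 y) ?Ay ?gy ?eqxx //= big1 ?addn0 ?mul1n // => x.
case/andP=> /andP[Ax /eqP gx] /eqP[]; apply: g_inj; rewrite ?gx ?gy //.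
Qed.

Lemma sum_pow2_lt k : \sum_(x | A x && (g x < k)) 2 ^ g x < 2 ^ k.
Proof.
elim: k => [|k IH]; first by rewrite big_pred0 // => x; rewrite andbF.
rewrite (bigID (fun x => g x == k)) /= expnS mul2n -addnn addnC.
have split_lt x : A x && (g x < k.+1) && (g x != k) = A x && (g x < k).
  by rewrite ltnS leq_eqVlt; case: eqP => [->|] /=; rewrite ?ltnn ?andbF ?andbT.
have split_eq x : A x && (g x < k.+1) && (g x == k) = A x && (g x == k).
  by case: eqP => [->|]; rewrite ?ltnSn ?andbT ?andbF.
rewrite (eq_bigl _ _ split_lt) (eq_bigl _ _ split_eq) sum_pow2_eq.
by apply: leq_add IH _; case: existsP; rewrite ?mul1n ?mul0n.
Qed.

Lemma bitn_sum_pow2 k :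
  bitn k (\sum_(x | A x) 2 ^ g x) = [exists x, A x && (g x == k)].
Proof.
rewrite (bigID (fun x => g x < k)) /= addnC.
rewrite (bigID (fun x => g x == k)) /=.
have split_eq x : A x && ~~ (g x < k) && (g x == k) = A x && (g x == k).
  by case: eqP => [->|]; rewrite ?ltnn ?andbT ?andbF.
rewrite (eq_bigl _ _ split_eq) sum_pow2_eq.
set high := \sum_(x | _ && (g x != k)) _.
have /dvdnP[q ->] : 2 ^ k.+1 %| high.
  apply: dvdn_sum => x /andP[/andP[_]]; rewrite -leqNgt => le_kg ne_gk.
  by rewrite dvdn_exp2l // ltn_neqAle eq_sym ne_gk.
rewrite /bitn expnS mulnA -mulnDl divnMDl ?expn_gt0 // divn_small ?sum_pow2_lt //.
by rewrite addn0 oddD oddM andbF addbF oddb.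
Qed.
End SumPow2.

Lemma exists_ord_succ n m : 0 < m <= n -> exists j : 'I_n, j.+1 = m.
Proof. by case: m => // m lt_mn; exists (Ordinal lt_mn). Qed.

Section Glaisher.
Variable n : nat.

Definition glaisher_mult (S : {set 'I_n}) (i : 'I_n) : nat :=
  \sum_(j in S | (j.+1)`_2^' == i.+1) 2 ^ logn 2 j.+1.

Definition glaisher_set (c : 'I_n -> nat) : {set 'I_n} :=
  [set j : 'I_n | [exists i : 'I_n, (i.+1 == (j.+1)`_2^') && bitn (logn 2 j.+1) (c i)]].

Lemma eq_glaisher_set c c' : c =1 c' -> glaisher_set c = glaisher_set c'.
Proof. by move=> eq_c; apply/eq_finset => j; apply: eq_existsb => i; rewrite eq_c. Qed.

Lemma odd_part_index (j : 'I_n) : exists i : 'I_n, i.+1 = (j.+1)`_2^'.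
Proof.
apply: exists_ord_succ; rewrite part_gt0 /=.
exact: leq_trans (odd_part_leq (ltn0Sn j)) (ltn_ord j).
Qed.

Lemma in_glaisher_set c (j i : 'I_n) : i.+1 = (j.+1)`_2^' ->
  (j \in glaisher_set c) = bitn (logn 2 j.+1) (c i).
Proof.
move=> ei; rewrite inE; apply/existsP/idP => [[i' /andP[/eqP ei' bit]] | bit].
  by have -> : i = i' by apply/val_inj/succn_inj; rewrite ei ei'.
by exists i; rewrite ei eqxx.
Qed.

Lemma bitn_glaisher_sum (P : pred 'I_n) o k :
  bitn k (\sum_(j | P j && ((j.+1)`_2^' == o)) 2 ^ logn 2 j.+1) =
  [exists j, P j && ((j.+1)`_2^' == o) && (logn 2 j.+1 == k)].
Proof.
apply: bitn_sum_pow2 => a b /andP[_ /eqP ea] /andP[_ /eqP eb] e.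
by apply/val_inj/succn_inj/odd_part_logn_inj => //; rewrite ea eb.
Qed.

Lemma sum_glaisher_mult S :
  \sum_(i < n) i.+1 * glaisher_mult S i = \sum_(j in S) j.+1.
Proof.
rewrite /glaisher_mult; under [LHS]eq_bigr => i _ do rewrite big_distrr.
rewrite (exchange_big_dep (fun j => j \in S)) => [|i j _ /andP[] //].
apply: eq_bigr => j jS; have [i0 ei0] := odd_part_index j.
rewrite (big_pred1 i0) => [|i]; first by rewrite /= ei0 odd_part_mul2.
by rewrite jS -ei0 eqSS eq_sym.
Qed.

Lemma glaisher_mult_leq S i : glaisher_mult S i <= \sum_(j in S) j.+1.
Proof.
by rewrite -sum_glaisher_mult (bigD1 i) //= (leq_trans _ (leq_addr _ _)) ?leq_pmull.
Qed.

Lemma glaisher_mult_odd S i : 0 < glaisher_mult S i -> odd i.+1.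
Proof.
apply: contraTT => even_i; rewrite -leqNgt leqn0 /glaisher_mult big_pred0 // => j.
by apply/negbTE; apply: contraNN even_i => /andP[_ /eqP <-]; apply: odd_part_odd.
Qed.

Lemma glaisher_multK S : glaisher_set (glaisher_mult S) = S.
Proof.
apply/setP => j; have [i ei] := odd_part_index j.
rewrite (in_glaisher_set _ ei) bitn_glaisher_sum.
apply/existsP/idP => [[j' /andP[/andP[j'S /eqP ej'] /eqP lj']] | jS].
  suff -> : j = j' by [].
  by apply/val_inj/succn_inj/odd_part_logn_inj => //; rewrite ej' ei.
by exists j; rewrite jS ei !eqxx.
Qed.

Lemma glaisher_setK (c : 'I_n -> nat) :
  (forall i : 'I_n, 0 < c i -> odd i.+1) -> (forall i : 'I_n, i.+1 * c i <= n) ->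
  glaisher_mult (glaisher_set c) =1 c.
Proof.
move=> c_odd c_le i; apply: eq_bitn => k; rewrite /glaisher_mult.
rewrite (eq_bigl (fun j : 'I_n =>
  bitn (logn 2 j.+1) (c i) && ((j.+1)`_2^' == i.+1))); last first.
  by move=> j; case: eqP => [ej|]; rewrite ?andbF // (in_glaisher_set _ (esym ej)).
rewrite bitn_glaisher_sum.
apply/existsP/idP => [[j /andP[/andP[bit _] /eqP <-]] // | bit].
have le_c := bitn_leq bit.
have odd_i : odd i.+1 by apply: c_odd; apply: leq_trans le_c; rewrite expn_gt0.
have [j ej] : exists j : 'I_n, j.+1 = i.+1 * 2 ^ k.
  apply: exists_ord_succ; rewrite muln_gt0 expn_gt0 /=.
  by apply: leq_trans (c_le i); rewrite leq_mul2l le_c orbT.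
have [odd_j logn_j] := odd_mul_pow2_parts k odd_i.
by exists j; rewrite ej odd_j logn_j bit !eqxx.
Qed.

End Glaisher.

Lemma card_in_bij (T1 T2 : finType) (P1 : pred T1) (P2 : pred T2)
    (f : T1 -> T2) (g : T2 -> T1) :
  {in P1, forall x, P2 (f x)} -> {in P2, forall y, P1 (g y)} ->
  {in P1, cancel f g} -> {in P2, cancel g f} -> #|P1| = #|P2|.
Proof.
move=> fP gP fK gK; rewrite -(card_in_imset (can_in_inj fK)).
apply: eq_card => y; apply/imsetP/idP => [[x Px ->] | Py]; first exact: fP.
by exists (g y); rewrite ?gK //; apply: gP.
Qed.

Lemma sum_prod_bool n (F : 'I_n * bool -> nat) :
  \sum_(p : 'I_n * bool) F p = \sum_(i < n) F (i, true) + \sum_(i < n) F (i, false).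
Proof.
transitivity (\sum_(i < n) \sum_(b : bool) F (i, b)).
  by rewrite pair_big; apply: eq_big => -[].
by rewrite -big_split; apply: eq_bigr => i _; rewrite big_bool.
Qed.

Section Colouring.
Variables r n : nat.

Definition colptn_of_overptn (x : {set 'I_n} * {ffun 'I_n -> 'I_n.+1}) :
  {ffun 'I_n * bool -> 'I_n.+1} :=
  [ffun p => if p.2 then x.2 p.1 else inord (glaisher_mult x.1 p.1)].

Definition overptn_of_colptn (m : {ffun 'I_n * bool -> 'I_n.+1}) :
  {set 'I_n} * {ffun 'I_n -> 'I_n.+1} :=
  (glaisher_set (fun i => m (i, false)), [ffun i => m (i, true)]).

Lemma overptn_glaisher_mult x i : overptn_odd_gt r n x ->
  (inord (glaisher_mult x.1 i) : 'I_n.+1) = glaisher_mult x.1 i :> nat.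
Proof.
case/andP=> /eqP sum_x _; rewrite inordK // ltnS.
by rewrite (leq_trans (glaisher_mult_leq _ _)) // -[leqRHS]sum_x leq_addr.
Qed.

Lemma colptn_colour1 m : colptn_odd r n m ->
  (forall i : 'I_n, 0 < m (i, false) -> odd i.+1) /\
  (forall i : 'I_n, i.+1 * m (i, false) <= n).
Proof.
case/andP=> /eqP sum_m /forallP odd_m; split=> [i m_gt0 | i].
  by have := odd_m (i, false); rewrite m_gt0 => /andP[].
by rewrite -[leqRHS]sum_m (bigD1 (i, false)) //= leq_addr.
Qed.

Lemma colptn_of_overptnP x :
  overptn_odd_gt r n x -> colptn_odd r n (colptn_of_overptn x).
Proof.
move=> ox; have mult_x := overptn_glaisher_mult _ ox.
case/andP: ox; case: x mult_x => S mu /= mult_x /eqP sum_x /forallP odd_mu.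
apply/andP; split.
  apply/eqP; rewrite sum_prod_bool addnC -[RHS]sum_x -sum_glaisher_mult.
  by congr (_ + _); apply: eq_bigr => i _; rewrite ffunE /= ?mult_x.
apply/forallP => -[i [] /=]; rewrite ffunE //= mult_x andbT.
by apply/implyP; apply: glaisher_mult_odd.
Qed.

Lemma overptn_of_colptnP m :
  colptn_odd r n m -> overptn_odd_gt r n (overptn_of_colptn m).
Proof.
move=> om; have [odd_m le_m] := colptn_colour1 om.
case/andP: om => /eqP sum_m /forallP odd_col.
apply/andP; split; last by apply/forallP => i; rewrite ffunE; apply: odd_col (i, true).
apply/eqP; rewrite -sum_glaisher_mult -[RHS]sum_m sum_prod_bool addnC /=.
by congr (_ + _); apply: eq_bigr => i _; rewrite ?ffunE ?glaisher_setK.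
Qed.

Lemma colptn_of_overptnK :
  {in overptn_odd_gt r n, cancel colptn_of_overptn overptn_of_colptn}.
Proof.
case=> S mu ox; rewrite /overptn_of_colptn; congr pair; last first.
  by apply/ffunP => i; rewrite !ffunE.
rewrite -[RHS](glaisher_multK S); apply: eq_glaisher_set => i.
by rewrite ffunE (overptn_glaisher_mult _ ox).
Qed.

Lemma overptn_of_colptnK :
  {in colptn_odd r n, cancel overptn_of_colptn colptn_of_overptn}.
Proof.
move=> m om; have [odd_m le_m] := colptn_colour1 om.
apply/ffunP => -[i [|]]; rewrite !ffunE //=.
by rewrite glaisher_setK // inord_val.
Qed.

End Colouring.

Theorem proposition2p5 (r : nat) (hr2 : 2 <= r) (hr : ~~ odd r) (n : nat) :
  num_overptn_odd_gt r n = num_colptn_odd r n.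
Proof.
apply: (card_in_bij (@colptn_of_overptnP r n) (@overptn_of_colptnP r n)).
  exact: colptn_of_overptnK.
exact: overptn_of_colptnK.
Qed.
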